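(* Let $\alpha\in C^\infty(\mathbb{R})$ satisfy $-1<\alpha<1$ and $\alpha(0)=0$, and set $\alpha^{(-1)}(t)=\int_0^t\alpha(s)\,ds$. Let $$p(x,\xi)=\sqrt{|\xi|^2+2\alpha(x_2)\xi_1\xi_3},\qquad x,\xi\in\mathbb{R}^3,$$ be the symbol of the cometric $\sum_{j,k} g^{jk}(x)d\xi_jd\xi_k=d\xi^2+2\alpha(x_2)\,d\xi_1d\xi_3$ on $T^*\mathbb{R}^3$, and let $\sum_{j,k} g_{jk}(x)dx_jdx_k$ be the corresponding Riemannian metric on $\mathbb{R}^3$, where $(g_{jk})=(g^{jk})^{-1}$. Then for each fixed $x_1\in\mathbb{R}$ and $-\pi/2<\theta<\pi/2$, the curve $$t\mapsto x(x_1,\theta;t)=\bigl(x_1+t\sin\theta,\ t\cos\theta,\ \sin\theta\,\alpha^{(-1)}(t\cos\theta)/\cos\theta\bigr)$$ is a geodesic for the metric $\sum g_{jk}dx_jdx_k$. Furthermore, the absolute value of the Jacobian determinant of the map $(x_1,\theta,t)\mapsto x(x_1,\theta;t)$ equals $|\alpha^{(-1)}(t)|$ when $\theta=0$. *)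

From Stdlib Require Import Reals.
From Coquelicot Require Import Coquelicot.
From mathcomp Require Import all_boot all_algebra.
From mathcomp Require Import Rstruct.

Set Implicit Arguments.
Unset Strict Implicit.
Unset Printing Implicit Defensive.

Import GRing.Theory Num.Theory.
Local Open Scope ring_scope.

(* Points of R^3 are functions 'I_3 -> R; indices 0,1,2 are the coordinates
   x_1, x_2, x_3 of the paper. *)
Definition pt := 'I_3 -> R.

Definition mkpt (a b c : R) : pt :=
  fun i => match nat_of_ord i with 0 => a | 1 => b | _ => c end.

Definition smooth (f : R -> R) : Prop :=
  forall (n : nat) (x : R), ex_derive_n f n x.

(* alpha^{(-1)}(t) = int_0^t alpha(s) ds  (oriented Riemann integral). *)
Definition alpha_prim (alpha : R -> R) (t : R) : R := RInt alpha 0 t.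

Definition Gup (alpha : R -> R) (x : pt) : 'M[R]_3 :=
  \matrix_(j < 3, k < 3)
    ((if j == k then 1 else 0) +
     (if ((nat_of_ord j == 0%N) && (nat_of_ord k == 2%N)) ||
         ((nat_of_ord j == 2%N) && (nat_of_ord k == 0%N))
      then alpha (x (inord 1)) else 0)).

Definition Glow (alpha : R -> R) (x : pt) : 'M[R]_3 := invmx (Gup alpha x).

Definition partial (f : pt -> R) (l : 'I_3) (x : pt) : R :=
  Derive (fun s => f (fun i => if i == l then x i + s else x i)) 0.

Definition christoffel (alpha : R -> R) (k i j : 'I_3) (x : pt) : R :=
  2^-1 * \sum_(l < 3)
      Gup alpha x k l *
      (partial (fun y => Glow alpha y j l) i x
       + partial (fun y => Glow alpha y i l) j x
       - partial (fun y => Glow alpha y i j) l x).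

Definition is_geodesic (alpha : R -> R) (c : R -> pt) : Prop :=
  forall (k : 'I_3) (t : R),
    ex_derive (fun s => c s k) t /\
    ex_derive (fun s => Derive (fun u => c u k) s) t /\
    Derive (fun s => Derive (fun u => c u k) s) t
     + \sum_(i < 3) \sum_(j < 3)
         christoffel alpha k i j (c t)
         * Derive (fun u => c u i) t * Derive (fun u => c u j) t = 0.

Definition curve (alpha : R -> R) (x1 theta t : R) : pt :=
  mkpt (x1 + t * sin theta)
       (t * cos theta)
       (sin theta * alpha_prim alpha (t * cos theta) / cos theta).

Definition curve_map (alpha : R -> R) (u : pt) : pt :=
  curve alpha (u (inord 0)) (u (inord 1)) (u (inord 2)).

Definition jacobian_det (F : pt -> pt) (u : pt) : R :=
  \det (\matrix_(i < 3, j < 3) partial (fun v => F v i) j u).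

(* The cometric depends on x only through a = alpha(x_2), and its inverse is
   explicit: g = (1 - a^2)^-1 [[1, 0, -a], [0, 1 - a^2, 0], [-a, 0, 1]].  So the
   metric only varies in the x_2 direction and the Christoffel symbols are
   rational functions of a and alpha'(x_2).  Along the curve the velocity is
   (sin th, cos th, sin th alpha(t cos th)) and the acceleration is
   (0, 0, sin th cos th alpha'(t cos th)); substituting them, each geodesic
   equation becomes a rational identity in a, alpha', sin th and cos th.
   At th = 0 the columns of the Jacobian matrix are (1, 0, 0),
   (t, 0, alpha^(-1)(t)) and (0, 1, 0), whose determinant is -alpha^(-1)(t). *)

From Stdlib Require Import Reals FunctionalExtensionality.
From Coquelicot Require Import Coquelicot.
From mathcomp Require Import all_boot all_algebra.
From mathcomp Require Import Rstruct.
From mathcomp Require Import ring lra.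

Set Implicit Arguments.
Unset Strict Implicit.
Unset Printing Implicit Defensive.

Import GRing.Theory Num.Theory.
Local Open Scope ring_scope.

Local Notation i0 := (@Ordinal 3 0 isT).
Local Notation i1 := (@Ordinal 3 1 isT).
Local Notation i2 := (@Ordinal 3 2 isT).

Lemma sum_ord3 (F : 'I_3 -> R) : \sum_(i < 3) F i = F i0 + F i1 + F i2.
Proof. by rewrite !big_ord_recr big_ord0 /= add0r; do 3 f_equal; apply: val_inj. Qed.

Lemma det_mx33 (A : 'M[R]_3) :
  \det A = A i0 i0 * (A i1 i1 * A i2 i2 - A i1 i2 * A i2 i1)
         - A i0 i1 * (A i1 i0 * A i2 i2 - A i1 i2 * A i2 i0)
         + A i0 i2 * (A i1 i0 * A i2 i1 - A i1 i1 * A i2 i0).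
Proof.
pose a (m n : nat) := A (inord m) (inord n).
have A_a i j : A i j = a i j by rewrite /a !inord_val.
rewrite (expand_det_row _ i0) sum_ord3 /cofactor.
rewrite !(expand_det_row _ ord0) !big_ord_recr !big_ord0 /= /cofactor !det_mx11.
by rewrite !mxE !A_a /=; ring.
Qed.

Lemma partial_is_derive (f : pt -> R) (l : 'I_3) (x : pt) (d : R) :
  is_derive (fun s => f (fun i => if i == l then s else x i)) (x l) d ->
  partial f l x = d.
Proof.
move=> fd; apply: is_derive_unique.
have shift : is_derive (fun s => Rplus (x l) s) 0 1 by auto_derive.
rewrite -[x l]addr0 in fd.
have := is_derive_comp _ _ _ _ _ fd shift; rewrite /scal /= /mult /= Rmult_1_l.
apply: is_derive_ext => s; congr f; apply: functional_extensionality => i.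
by case: eqP => [-> |].
Qed.

Lemma eq_partial (f g : pt -> R) (l : 'I_3) (x : pt) :
  (forall y, f y = g y) -> partial f l x = partial g l x.
Proof. by move=> fg; apply: Derive_ext => s; apply: fg. Qed.

Lemma partial_comp_coord (f : R -> R) (l0 l : 'I_3) (x : pt) (d : R) :
  is_derive f (x l0) d ->
  partial (fun y => f (y l0)) l x = if l == l0 then d else 0.
Proof.
move=> fd; apply: partial_is_derive.
case: (eqVneq l l0) => [-> | l_neq].
  by apply: (is_derive_ext f) => // s; rewrite eqxx.
by apply: (is_derive_ext (fun=> f (x l0))) => //; apply: is_derive_const.
Qed.

Lemma is_derive_alpha_prim (f : R -> R) (t : R) :
  (forall s, continuous f s) -> is_derive (alpha_prim f) t (f t).
Proof.
move=> f_cont; apply: is_derive_RInt; last exact: f_cont.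
apply: filter_forall => u; apply: RInt_correct; apply: ex_RInt_continuous => s _.
exact: f_cont.
Qed.

Definition corner (j k : 'I_3) : bool :=
  ((nat_of_ord j == 0%N) && (nat_of_ord k == 2%N)) ||
  ((nat_of_ord j == 2%N) && (nat_of_ord k == 0%N)).

Definition cometric (a : R) : 'M[R]_3 :=
  \matrix_(j, k) ((if j == k then 1 else 0) + (if corner j k then a else 0)).

Definition metric (a : R) : 'M[R]_3 :=
  \matrix_(j, k) (if corner j k then - a / (1 - a ^+ 2)
                  else if j == k then (if j == i1 then 1 else (1 - a ^+ 2)^-1)
                  else 0).

Definition dmetric (a : R) : 'M[R]_3 :=
  \matrix_(j, k) (if corner j k then - (1 + a ^+ 2) / (1 - a ^+ 2) ^+ 2
                  else if j == k then (if j == i1 then 0 else 2 * a / (1 - a ^+ 2) ^+ 2)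
                  else 0).

Lemma mul_cometric_metric (a : R) : a ^+ 2 != 1 -> cometric a *m metric a = 1%:M.
Proof.
rewrite eq_sym -subr_eq0 => a2; apply/matrixP => j k; rewrite !mxE sum_ord3 !mxE.
by case: j => [[|[|[|j]]] ?] //; case: k => [[|[|[|k]]] ?] //=; field.
Qed.

Lemma invmx_cometric (a : R) : a ^+ 2 != 1 -> invmx (cometric a) = metric a.
Proof.
move=> a2; have cm := mul_cometric_metric a2.
have [cometric_unit _] := mulmx1_unit cm.
by rewrite -[metric a]mul1mx -(mulVmx cometric_unit) -mulmxA cm mulmx1.
Qed.

Lemma is_derive_inv_1_sub_sqr (a : R) : a ^+ 2 != 1 ->
  is_derive (fun b : R => (1 - b ^+ 2)^-1) a (2 * a / (1 - a ^+ 2) ^+ 2).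
Proof.
rewrite eq_sym -subr_eq0 => a2.
apply: (is_derive_ext (fun b : R => Rinv (Rminus 1 (Rmult b b)))) => //.
by auto_derive; [move/eqP: a2 | rewrite !RealsE; field].
Qed.

Lemma is_derive_opp_div_1_sub_sqr (a : R) : a ^+ 2 != 1 ->
  is_derive (fun b : R => - b / (1 - b ^+ 2)) a (- (1 + a ^+ 2) / (1 - a ^+ 2) ^+ 2).
Proof.
rewrite eq_sym -subr_eq0 => a2.
apply: (is_derive_ext (fun b : R => Rdiv (Ropp b) (Rminus 1 (Rmult b b)))) => //.
by auto_derive; [move/eqP: a2 | rewrite !RealsE; field].
Qed.

Lemma is_derive_metric (a : R) (j k : 'I_3) : a ^+ 2 != 1 ->
  is_derive (fun b : R => metric b j k) a (dmetric a j k).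
Proof.
move=> a2; rewrite mxE.
apply: (is_derive_ext (fun b : R => if corner j k then - b / (1 - b ^+ 2)
   else if j == k then (if j == i1 then 1 else (1 - b ^+ 2)^-1) else 0)).
  by move=> b; rewrite mxE.
case: (corner j k); first exact: is_derive_opp_div_1_sub_sqr.
case: (j == k); last exact: is_derive_const.
by case: (j == i1); [apply: is_derive_const | apply: is_derive_inv_1_sub_sqr].
Qed.

(* [d_i g_jk] at a point where alpha(x_2) = a and alpha'(x_2) = d. *)
Definition metric_partial (a d : R) (i j k : 'I_3) : R :=
  if i == i1 then dmetric a j k * d else 0.

Definition christoffel_sym (a d : R) (k i j : 'I_3) : R :=
  2^-1 * \sum_(l < 3) cometric a k l *
    (metric_partial a d i j l + metric_partial a d j i l - metric_partial a d l i j).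

Lemma geodesic_identity (a d s c : R) (k : 'I_3) : a ^+ 2 != 1 ->
  mkpt 0 0 (s * c * d) k + \sum_(i < 3) \sum_(j < 3)
    christoffel_sym a d k i j * mkpt s c (s * a) i * mkpt s c (s * a) j = 0.
Proof.
rewrite eq_sym -subr_eq0 => a2.
rewrite !sum_ord3 /christoffel_sym !sum_ord3 /metric_partial !mxE /mkpt.
by case: k => [[|[|[|k]]] ?] //=; rewrite !RealsE; field.
Qed.

Section Curve.

Variable alpha : R -> R.
Hypothesis alpha_derivable : forall s, ex_derive alpha s.
Hypothesis alpha_sqr_neq1 : forall s, alpha s ^+ 2 != 1.

Lemma Gup_cometric (x : pt) : Gup alpha x = cometric (alpha (x i1)).
Proof. by apply/matrixP => j k; rewrite !mxE (inord_val i1). Qed.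

Lemma Glow_metric (x : pt) : Glow alpha x = metric (alpha (x i1)).
Proof. by rewrite /Glow Gup_cometric invmx_cometric. Qed.

Lemma is_derive_metric_alpha (j k : 'I_3) (b : R) :
  is_derive (fun b => metric (alpha b) j k) b (dmetric (alpha b) j k * Derive alpha b).
Proof.
have := is_derive_comp _ _ _ _ _ (is_derive_metric j k (alpha_sqr_neq1 b))
  (Derive_correct _ _ (alpha_derivable b)).
by rewrite /scal /= /mult /= mulrC.
Qed.

Lemma partial_Glow (i j k : 'I_3) (x : pt) :
  partial (fun y => Glow alpha y j k) i x =
  metric_partial (alpha (x i1)) (Derive alpha (x i1)) i j k.
Proof.
rewrite (eq_partial (g := fun y => metric (alpha (y i1)) j k)) => [|y].
  exact: (partial_comp_coord (f := fun b => metric (alpha b) j k)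
                             _ (is_derive_metric_alpha j k _)).
by rewrite Glow_metric.
Qed.

Lemma christoffelE (k i j : 'I_3) (x : pt) :
  christoffel alpha k i j x = christoffel_sym (alpha (x i1)) (Derive alpha (x i1)) k i j.
Proof.
rewrite /christoffel /christoffel_sym; congr (_ * _); apply: eq_bigr => l _.
by rewrite !partial_Glow Gup_cometric.
Qed.

Lemma is_derive_alpha_prim_alpha (t : R) : is_derive (alpha_prim alpha) t (alpha t).
Proof. by apply: is_derive_alpha_prim => s; apply: ex_derive_continuous. Qed.

Lemma Derive_alpha_prim (t : R) : Derive (fun s => alpha_prim alpha s) t = alpha t.
Proof. exact/is_derive_unique/is_derive_alpha_prim_alpha. Qed.

Definition curve_velocity (th t : R) : pt :=
  mkpt (sin th) (cos th) (sin th * alpha (t * cos th)).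

Lemma is_derive_curve (x1 th t : R) (k : 'I_3) : cos th != 0 ->
  is_derive (fun u => curve alpha x1 th u k) t (curve_velocity th t k).
Proof.
move=> cos_neq0; rewrite /curve /curve_velocity /mkpt.
case: k => [[|[|[|k]]] ?] //=.
- by auto_derive => //; rewrite !RealsE; ring.
- by auto_derive => //; rewrite !RealsE; ring.
- auto_derive; first by eexists; apply: is_derive_alpha_prim_alpha.
  by rewrite Derive_alpha_prim !RealsE; field.
Qed.

Lemma is_derive_curve_velocity (th t : R) (k : 'I_3) :
  is_derive (fun u => curve_velocity th u k) t
    (mkpt 0 0 (sin th * cos th * Derive alpha (t * cos th)) k).
Proof.
rewrite /curve_velocity /mkpt; case: k => [[|[|[|k]]] ?] //=.
- exact: is_derive_const.
- exact: is_derive_const.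
- by auto_derive; [apply: alpha_derivable | rewrite !RealsE; ring].
Qed.

Lemma curve_is_geodesic (x1 th : R) : cos th != 0 -> is_geodesic alpha (curve alpha x1 th).
Proof.
move=> cos_neq0 k t.
have Derive_curve u i : Derive (fun u => curve alpha x1 th u i) u = curve_velocity th u i.
  exact/is_derive_unique/is_derive_curve.
split; first by eexists; apply: is_derive_curve.
split.
  apply: (ex_derive_ext (fun u => curve_velocity th u k)) => [u|].
    by rewrite Derive_curve.
  by eexists; apply: is_derive_curve_velocity.
rewrite (Derive_ext _ _ _ (Derive_curve^~ k)).
rewrite (is_derive_unique _ _ _ (is_derive_curve_velocity _ _ _)).
under eq_bigr do under eq_bigr do rewrite christoffelE !Derive_curve.
exact: geodesic_identity.
Qed.

Lemma curve_mapE (u : pt) : curve_map alpha u = curve alpha (u i0) (u i1) (u i2).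
Proof. by rewrite /curve_map (inord_val i0) (inord_val i1) (inord_val i2). Qed.

Lemma is_derive_curve_x1 (x1 th t : R) (k : 'I_3) :
  is_derive (fun x => curve alpha x th t k) x1 (mkpt 1 0 0 k).
Proof.
rewrite /curve /mkpt; case: k => [[|[|[|k]]] ?] //=; last exact: is_derive_const.
- by auto_derive; rewrite ?RealsE.
- exact: is_derive_const.
Qed.

Lemma is_derive_curve_theta0 (x1 t : R) (k : 'I_3) :
  is_derive (fun th => curve alpha x1 th t k) 0 (mkpt t 0 (alpha_prim alpha t) k).
Proof.
have [sin0 cos0] : sin 0 = 0 /\ cos 0 = 1 := conj sin_0 cos_0.
rewrite /curve /mkpt; case: k => [[|[|[|k]]] ?] //=.
- by auto_derive => //; rewrite cos0 !RealsE; ring.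
- by auto_derive => //; rewrite sin0 !RealsE; ring.
- auto_derive; rewrite ?sin0 ?cos0.
    split; first by eexists; apply: is_derive_alpha_prim_alpha.
    by split => //; apply/eqP/oner_neq0.
  by rewrite !RealsE !mulr1; field.
Qed.

Lemma jacobian_det_curve_map (x1 t : R) :
  jacobian_det (curve_map alpha) (mkpt x1 0 t) = - alpha_prim alpha t.
Proof.
have d_x1 i : partial (fun v => curve_map alpha v i) i0 (mkpt x1 0 t) = mkpt 1 0 0 i.
  apply/partial_is_derive/(is_derive_ext (fun x => curve alpha x 0 t i)).
    by move=> s; rewrite curve_mapE.
  exact: is_derive_curve_x1.
have d_theta i : partial (fun v => curve_map alpha v i) i1 (mkpt x1 0 t) =
                 mkpt t 0 (alpha_prim alpha t) i.
  apply/partial_is_derive/(is_derive_ext (fun th => curve alpha x1 th t i)).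
    by move=> s; rewrite curve_mapE.
  exact: is_derive_curve_theta0.
have d_t i : partial (fun v => curve_map alpha v i) i2 (mkpt x1 0 t) = curve_velocity 0 t i.
  apply/partial_is_derive/(is_derive_ext (fun u => curve alpha x1 0 u i)).
    by move=> s; rewrite curve_mapE.
  by apply: is_derive_curve; rewrite cos_0 oner_neq0.
rewrite /jacobian_det det_mx33 !mxE !d_x1 !d_theta !d_t /curve_velocity /mkpt /=.
by rewrite sin_0 cos_0 !RealsE; ring.
Qed.

End Curve.

Lemma sqr_neq1 (a : R) : -1 < a < 1 -> a ^+ 2 != 1.
Proof. by case/andP=> ? ?; apply/eqP => a2; nra. Qed.

Theorem lemma2p1 (alpha : R -> R)
  (Hsmooth : smooth alpha)
  (Hbound : forall s : R, Rlt (-1) (alpha s) /\ Rlt (alpha s) 1)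
  (H0 : alpha R0 = R0) :
  (forall x1 theta : R,
     Rlt (Ropp (Rdiv PI 2)) theta -> Rlt theta (Rdiv PI 2) ->
     is_geodesic alpha (fun t => curve alpha x1 theta t)) /\
  (forall x1 t : R,
     Rabs (jacobian_det (curve_map alpha) (mkpt x1 R0 t))
     = Rabs (alpha_prim alpha t)).
Proof.
have alpha_derivable s : ex_derive alpha s := Hsmooth 1%N s.
have alpha_sqr_neq1 s : alpha s ^+ 2 != 1.
  by case: (Hbound s) => /RltP ? /RltP ?; apply/sqr_neq1/andP.
split=> [x1 th th_gt th_lt | x1 t].
  apply: curve_is_geodesic => //.
  by have /RltP cos_gt0 := cos_gt_0 th th_gt th_lt; rewrite lt0r_neq0.
by rewrite jacobian_det_curve_map // Rabs_Ropp.
Qed.
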